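(* Let $\kappa\in\mathbb{K}$, let $(\mathfrak{g},[-,-,-]_\mathfrak{g},\alpha_\mathfrak{g})$ and $(\mathfrak{h},[-,-,-]_\mathfrak{h},\alpha_\mathfrak{h})$ be regular Hom-Lie triple systems, $\theta$ an action of $\mathfrak{g}$ on $\mathfrak{h}$, and $\mathcal{A}:\mathfrak{h}\to\mathfrak{g}$ a $\kappa$-weighted $\mathcal{O}$-operator with respect to $\theta$. Then there is a bijection between the set of equivalence classes of linear deformations of $\mathcal{A}$ and the first cohomology group $\mathcal{H}^1_\mathcal{A}(\mathfrak{h},\mathfrak{g})$.
   Context: All vector spaces are over a field $\mathbb{K}$ of characteristic zero. A Hom-Lie triple system $(\mathfrak{g},[-,-,-]_\mathfrak{g},\alpha_\mathfrak{g})$ is a vector space with a trilinear map $[-,-,-]_\mathfrak{g}$ and a linear map $\alpha_\mathfrak{g}$ with $\alpha_\mathfrak{g}([x,y,z]_\mathfrak{g})=[\alpha_\mathfrak{g}(x),\alpha_\mathfrak{g}(y),\alpha_\mathfrak{g}(z)]_\mathfrak{g}$ such that for all $x,y,z,a,b$: $[x,y,z]_\mathfrak{g}+[y,x,z]_\mathfrak{g}=0$; $[x,y,z]_\mathfrak{g}+[z,x,y]_\mathfrak{g}+[y,z,x]_\mathfrak{g}=0$; $[\alpha_\mathfrak{g}(a),\alpha_\mathfrak{g}(b),[x,y,z]_\mathfrak{g}]_\mathfrak{g}=[[a,b,x]_\mathfrak{g},\alpha_\mathfrak{g}(y),\alpha_\mathfrak{g}(z)]_\mathfrak{g}+[\alpha_\mathfrak{g}(x),[a,b,y]_\mathfrak{g},\alpha_\mathfrak{g}(z)]_\mathfrak{g}+[\alpha_\mathfrak{g}(x),\alpha_\mathfrak{g}(y),[a,b,z]_\mathfrak{g}]_\mathfrak{g}$.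 It is regular if $\alpha_\mathfrak{g}$ is bijective. A homomorphism $\varphi$ of Hom-Lie triple systems satisfies $\varphi\circ\alpha_1=\alpha_2\circ\varphi$ and $\varphi([x,y,z]_1)=[\varphi x,\varphi y,\varphi z]_2$. A representation of $\mathfrak{g}$ on $(V,\beta)$ is a bilinear map $\theta:\mathfrak{g}\times\mathfrak{g}\to\mathrm{End}(V)$ such that, with $D(x,y)=\theta(y,x)-\theta(x,y)$, for all $x,y,a,b$: $\theta(\alpha_\mathfrak{g}(x),\alpha_\mathfrak{g}(y))\circ\beta=\beta\circ\theta(x,y)$; $\theta(\alpha_\mathfrak{g}(a),\alpha_\mathfrak{g}(b))\theta(x,y)-\theta(\alpha_\mathfrak{g}(y),\alpha_\mathfrak{g}(b))\theta(x,a)-\theta(\alpha_\mathfrak{g}(x),[y,a,b]_\mathfrak{g})\circ\beta+D(\alpha_\mathfrak{g}(y),\alpha_\mathfrak{g}(a))\theta(x,b)=0$; $\theta(\alpha_\mathfrak{g}(a),\alpha_\mathfrak{g}(b))D(x,y)-D(\alpha_\mathfrak{g}(x),\alpha_\mathfrak{g}(y))\theta(a,b)+\theta([x,y,a]_\mathfrak{g},\alpha_\mathfrak{g}(b))\circ\beta+\theta(\alpha_\mathfrak{g}(a),[x,y,b]_\mathfrak{g})\circ\beta=0$. An action of $\mathfrak{g}$ on a Hom-Lie triple system $(\mathfrak{h},[-,-,-]_\mathfrak{h},\alpha_\mathfrak{h})$ is a representation $\theta$ of $\mathfrak{g}$ on $(\mathfrak{h},\alpha_\mathfrak{h})$ such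 that for all $x,y\in\mathfrak{g}$, $u,v,w\in\mathfrak{h}$: $\theta(\alpha_\mathfrak{g}(x),\alpha_\mathfrak{g}(y))[u,v,w]_\mathfrak{h}=[\theta(x,y)u,\alpha_\mathfrak{h}(v),\alpha_\mathfrak{h}(w)]_\mathfrak{h}+[\alpha_\mathfrak{h}(u),\theta(x,y)v,\alpha_\mathfrak{h}(w)]_\mathfrak{h}+[\alpha_\mathfrak{h}(u),\alpha_\mathfrak{h}(v),\theta(x,y)w]_\mathfrak{h}$ and $\theta(\alpha_\mathfrak{g}(x),\alpha_\mathfrak{g}(y))[u,v,w]_\mathfrak{h}=[\alpha_\mathfrak{h}(u),\alpha_\mathfrak{h}(v),\theta(x,y)w]_\mathfrak{h}=0$. A $\kappa$-weighted $\mathcal{O}$-operator from $\mathfrak{h}$ to $\mathfrak{g}$ with respect to $\theta$ is a linear map $\mathcal{A}:\mathfrak{h}\to\mathfrak{g}$ with $\mathcal{A}\circ\alpha_\mathfrak{h}=\alpha_\mathfrak{g}\circ\mathcal{A}$ and $[\mathcal{A}u,\mathcal{A}v,\mathcal{A}w]_\mathfrak{g}=\mathcal{A}\big(D(\mathcal{A}u,\mathcal{A}v)w-\theta(\mathcal{A}u,\mathcal{A}w)v+\theta(\mathcal{A}v,\mathcal{A}w)u+\kappa[u,v,w]_\mathfrak{h}\big)$. A homomorphism from such an operator $\mathcal{A}_1$ to another $\mathcal{A}_2$ is a pair of Hom-Lie triple system homomorphisms $\varphi_\mathfrak{h}:\mathfrak{h}\to\mathfrak{h}$, $\varphi_\mathfrak{g}:\mathfrak{g}\to\mathfrak{g}$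 with $\varphi_\mathfrak{g}\circ\mathcal{A}_1=\mathcal{A}_2\circ\varphi_\mathfrak{h}$ and $\varphi_\mathfrak{h}(\theta(x,y)u)=\theta(\varphi_\mathfrak{g}(x),\varphi_\mathfrak{g}(y))\varphi_\mathfrak{h}(u)$. Cohomology: put $\{u,v,w\}_\mathcal{A}=D(\mathcal{A}u,\mathcal{A}v)w-\theta(\mathcal{A}u,\mathcal{A}w)v+\theta(\mathcal{A}v,\mathcal{A}w)u+\kappa[u,v,w]_\mathfrak{h}$, $\theta_\mathcal{A}(u,v)(x)=[x,\mathcal{A}u,\mathcal{A}v]_\mathfrak{g}+\mathcal{A}(\theta(x,\mathcal{A}v)u-D(x,\mathcal{A}u)v)$ and $D_\mathcal{A}(u,v)=\theta_\mathcal{A}(v,u)-\theta_\mathcal{A}(u,v)$. The 1-cocycles $\mathcal{Z}^1_\mathcal{A}(\mathfrak{h},\mathfrak{g})$ are linear maps $f:\mathfrak{h}\to\mathfrak{g}$ with $\alpha_\mathfrak{g}\circ f=f\circ\alpha_\mathfrak{h}$ and $\theta_\mathcal{A}(v_2,v_3)f(v_1)-\theta_\mathcal{A}(v_1,v_3)f(v_2)+D_\mathcal{A}(v_1,v_2)f(v_3)-f(\{v_1,v_2,v_3\}_\mathcal{A})=0$ for all $v_i\in\mathfrak{h}$. For $a,b\in\mathfrak{g}$ with $\alpha_\mathfrak{g}(a)=a,\alpha_\mathfrak{g}(b)=b$ let $\Im(a,b)v=\mathcal{A}(D(a,b)\alpha_\mathfrak{h}^{-1}(v))-[a,b,\mathcal{A}\alpha_\mathfrak{h}^{-1}(v)]_\mathfrak{g}$;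 the 1-coboundaries $\mathcal{B}^1_\mathcal{A}(\mathfrak{h},\mathfrak{g})$ form the span of all such $\Im(a,b)$ (these lie in $\mathcal{Z}^1_\mathcal{A}$), and $\mathcal{H}^1_\mathcal{A}(\mathfrak{h},\mathfrak{g})=\mathcal{Z}^1_\mathcal{A}(\mathfrak{h},\mathfrak{g})/\mathcal{B}^1_\mathcal{A}(\mathfrak{h},\mathfrak{g})$. A linear deformation of $\mathcal{A}$ is $\mathcal{A}_t=\mathcal{A}+t\mathcal{A}_1$ with $\mathcal{A}_1:\mathfrak{h}\to\mathfrak{g}$ linear and $t$ a parameter with $t^2=0$, such that $\mathcal{A}_t$ is a $\kappa$-weighted $\mathcal{O}$-operator (all structures extended $\mathbb{K}[t]/(t^2)$-linearly). Two linear deformations $\mathcal{A}_t=\mathcal{A}+t\mathcal{A}_1$ and $\mathcal{A}'_t=\mathcal{A}+t\mathcal{A}'_1$ are equivalent if there exist $a,b\in\mathfrak{g}$ with $\alpha_\mathfrak{g}(a)=a$, $\alpha_\mathfrak{g}(b)=b$ such that the pair $(\mathrm{Id}_\mathfrak{h}+t\,\alpha_\mathfrak{h}^{-1}\circ D(a,b),\ \mathrm{Id}_\mathfrak{g}+t\,\alpha_\mathfrak{g}^{-1}\circ\mathcal{L}(a,b))$, where $\mathcal{L}(a,b)x=[a,b,x]_\mathfrak{g}$, is a homomorphism from $\mathcal{A}_t$ to $\mathcal{A}'_t$ (the first map playing the role of $\varphi_\mathfrak{h}$, the second of $\varphi_\mathfrak{g}$). *)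

From HB Require Import structures.
From mathcomp Require Import all_boot all_algebra.
From Stdlib Require Import Relations.
Set Implicit Arguments. Unset Strict Implicit. Unset Printing Implicit Defensive.
Import GRing.Theory.
Local Open Scope ring_scope.

Section HomLTS.
Variable K : fieldType.

Definition linmap (U V : lmodType K) (f : U -> V) : Prop :=
  forall (c : K) x y, f (c *: x + y) = c *: f x + f y.

Definition trilinear (V : lmodType K) (br : V -> V -> V -> V) : Prop :=
  (forall y z, linmap (fun x => br x y z)) /\
  (forall x z, linmap (fun y => br x y z)) /\
  (forall x y, linmap (fun z => br x y z)).

Definition HomLTS (V : lmodType K) (br : V -> V -> V -> V) (al : V -> V) : Prop :=
  linmap al /\ trilinear br /\
      (forall x y z, al (br x y z) = br (al x) (al y) (al z)) /\
      (forall x y z, br x y z + br y x z = 0) /\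
      (forall x y z, br x y z + br z x y + br y z x = 0) /\
      (forall a b x y z,
         br (al a) (al b) (br x y z) =
         br (br a b x) (al y) (al z) + br (al x) (br a b y) (al z)
         + br (al x) (al y) (br a b z)).

Definition HomLTS_hom (V W : lmodType K)
  (br1 : V -> V -> V -> V) (al1 : V -> V) (br2 : W -> W -> W -> W) (al2 : W -> W)
  (phi : V -> W) : Prop :=
  [/\ linmap phi, (forall x, phi (al1 x) = al2 (phi x)) &
      (forall x y z, phi (br1 x y z) = br2 (phi x) (phi y) (phi z))].

Definition Dop (G V : lmodType K) (theta : G -> G -> V -> V) (x y : G) : V -> V :=
  fun u => theta y x u - theta x y u.

Definition representation (G V : lmodType K) (brg : G -> G -> G -> G) (alg : G -> G)
  (theta : G -> G -> V -> V) (beta : V -> V) : Prop :=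
  linmap beta /\
      (forall x y, linmap (theta x y)) /\
      (forall y u, linmap (fun x => theta x y u)) /\
      (forall x u, linmap (fun y => theta x y u)) /\
      (forall x y u, theta (alg x) (alg y) (beta u) = beta (theta x y u)) /\
      (forall x y a b u,
         theta (alg a) (alg b) (theta x y u) - theta (alg y) (alg b) (theta x a u)
         - theta (alg x) (brg y a b) (beta u)
         + Dop theta (alg y) (alg a) (theta x b u) = 0) /\
      (forall x y a b u,
         theta (alg a) (alg b) (Dop theta x y u) - Dop theta (alg x) (alg y) (theta a b u)
         + theta (brg x y a) (alg b) (beta u) + theta (alg a) (brg x y b) (beta u) = 0).

Definition action (G H : lmodType K) (brg : G -> G -> G -> G) (alg : G -> G)
  (brh : H -> H -> H -> H) (alh : H -> H) (theta : G -> G -> H -> H) : Prop :=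
  [/\ representation brg alg theta alh,
      (forall x y u v w,
         theta (alg x) (alg y) (brh u v w) =
         brh (theta x y u) (alh v) (alh w) + brh (alh u) (theta x y v) (alh w)
         + brh (alh u) (alh v) (theta x y w)),
      (forall x y u v w, theta (alg x) (alg y) (brh u v w) = 0) &
      (forall x y u v w, brh (alh u) (alh v) (theta x y w) = 0)].

Definition OOp (G H : lmodType K) (brg : G -> G -> G -> G) (alg : G -> G)
  (brh : H -> H -> H -> H) (alh : H -> H) (theta : G -> G -> H -> H) (kappa : K)
  (A : H -> G) : Prop :=
  [/\ linmap A, (forall u, A (alh u) = alg (A u)) &
      (forall u v w,
         brg (A u) (A v) (A w) =
         A (Dop theta (A u) (A v) w - theta (A u) (A w) v + theta (A v) (A w) u
            + kappa *: brh u v w))].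

Definition OOp_hom (G H : lmodType K) (brg : G -> G -> G -> G) (alg : G -> G)
  (brh : H -> H -> H -> H) (alh : H -> H) (theta : G -> G -> H -> H)
  (A1 A2 : H -> G) (phih : H -> H) (phig : G -> G) : Prop :=
  [/\ HomLTS_hom brh alh brh alh phih, HomLTS_hom brg alg brg alg phig,
      (forall u, phig (A1 u) = A2 (phih u)) &
      (forall x y u, phih (theta x y u) = theta (phig x) (phig y) (phih u))].

(* An element x0 + t x1 of V (x) K[t]/(t^2) is represented by the pair (x0, x1);
   as a K-vector space this is V * V (componentwise operations), and the
   K-scalar action coincides with the action of K inside K[t]/(t^2). *)
Definition dual (V : lmodType K) := (V * V)%type.

Definition ext1 (V W : lmodType K) (f : V -> W) : dual V -> dual W :=
  fun x => (f x.1, f x.2).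

(* K[t]/(t^2)-trilinear extension of a trilinear map (t^2 = 0) *)
Definition ext3 (V : lmodType K) (br : V -> V -> V -> V) :
  dual V -> dual V -> dual V -> dual V :=
  fun x y z => (br x.1 y.1 z.1, br x.2 y.1 z.1 + br x.1 y.2 z.1 + br x.1 y.1 z.2).

(* K[t]/(t^2)-bilinear extension of theta, valued in K[t]/(t^2)-linear maps *)
Definition extTheta (G H : lmodType K) (theta : G -> G -> H -> H) :
  dual G -> dual G -> dual H -> dual H :=
  fun x y u => (theta x.1 y.1 u.1,
                theta x.2 y.1 u.1 + theta x.1 y.2 u.1 + theta x.1 y.1 u.2).

(* A_t = A + t A1, extended K[t]/(t^2)-linearly *)
Definition defo (G H : lmodType K) (A A1 : H -> G) : dual H -> dual G :=
  fun u => (A u.1, A u.2 + A1 u.1).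

(* Id + t f, extended K[t]/(t^2)-linearly *)
Definition idPlusT (V : lmodType K) (f : V -> V) : dual V -> dual V :=
  fun x => (x.1, x.2 + f x.1).

Section Fixed.
Variables (G H : lmodType K) (brg : G -> G -> G -> G) (alg alg_inv : G -> G)
  (brh : H -> H -> H -> H) (alh alh_inv : H -> H) (theta : G -> G -> H -> H)
  (kappa : K) (A : H -> G).

Definition linear_deformation (A1 : H -> G) : Prop :=
  linmap A1 /\
  OOp (ext3 brg) (ext1 alg) (ext3 brh) (ext1 alh) (extTheta theta) kappa (defo A A1).

Definition equiv_deformations (A1 A1' : H -> G) : Prop :=
  exists a b : G, [/\ alg a = a, alg b = b &
    OOp_hom (ext3 brg) (ext1 alg) (ext3 brh) (ext1 alh) (extTheta theta)
      (defo A A1) (defo A A1')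
      (idPlusT (fun u => alh_inv (Dop theta a b u)))
      (idPlusT (fun x => alg_inv (brg a b x)))].

(* the set of equivalence classes: quotient of the set of linear deformations
   by (the equivalence relation generated by) equiv_deformations *)
Definition deformation_rel (A1 A1' : H -> G) : Prop :=
  [/\ linear_deformation A1, linear_deformation A1' & equiv_deformations A1 A1'].

Definition deformation_equiv : relation (H -> G) :=
  clos_refl_sym_trans (H -> G) deformation_rel.

Definition bracketA (u v w : H) : H :=
  Dop theta (A u) (A v) w - theta (A u) (A w) v + theta (A v) (A w) u + kappa *: brh u v w.

Definition thetaA (u v : H) : G -> G :=
  fun x => brg x (A u) (A v) + A (theta x (A v) u - Dop theta x (A u) v).

Definition DA (u v : H) : G -> G := fun x => thetaA v u x - thetaA u v x.

Definition Z1 (f : H -> G) : Prop :=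
  [/\ linmap f, (forall u, alg (f u) = f (alh u)) &
      (forall v1 v2 v3,
         thetaA v2 v3 (f v1) - thetaA v1 v3 (f v2) + DA v1 v2 (f v3)
         - f (bracketA v1 v2 v3) = 0)].

Definition Imap (a b : G) : H -> G :=
  fun v => A (Dop theta a b (alh_inv v)) - brg a b (A (alh_inv v)).

Definition B1 (f : H -> G) : Prop :=
  exists s : seq (K * G * G),
    all (fun p => (alg p.1.2 == p.1.2) && (alg p.2 == p.2)) s /\
    forall v, f v = \sum_(p <- s) p.1.1 *: Imap p.1.2 p.2 v.

End Fixed.
End HomLTS.

(* Comparing coefficients of t, A + tA1 is a kappa-weighted O-operator exactly
   when A1 is a 1-cocycle, so the linear deformations are the 1-cocycles
   themselves.  For fixed points a, b of alpha_g, the maps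
   alpha_h^-1 D(a,b) and alpha_g^-1 L(a,b) are derivations of h and g that are
   compatible with theta (this is where the action axioms enter), so the pair
   Id + t(...) is always a pair of homomorphisms of the extended triple
   systems; it carries A + tA1 to A + tA1' exactly when A1 - A1' = Im(a,b).
   Being surjective, it transports the O-operator identity, so A1 - Im(a,b) is
   again a deformation.  Hence two deformations are equivalent iff their
   difference lies in B^1, and A1 |-> A1 induces the bijection. *)

From HB Require Import structures.
From mathcomp Require Import all_boot all_algebra.
From Stdlib Require Import Relations FunctionalExtensionality.
Set Implicit Arguments. Unset Strict Implicit. Unset Printing Implicit Defensive.
Import GRing.Theory.
Local Open Scope ring_scope.

Inductive zexpr := ZVar of nat | ZAdd of zexpr & zexpr | ZOpp of zexpr | ZZero.

Fixpoint zeval (V : zmodType) (env : seq V) (e : zexpr) : V :=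
  match e with
  | ZVar n => env`_n
  | ZAdd e1 e2 => zeval env e1 + zeval env e2
  | ZOpp e1 => - zeval env e1
  | ZZero => 0
  end.

Fixpoint zcoef (e : zexpr) (i : nat) : int :=
  match e with
  | ZVar n => (n == i)%:Z
  | ZAdd e1 e2 => zcoef e1 i + zcoef e2 i
  | ZOpp e1 => - zcoef e1 i
  | ZZero => 0
  end.

Fixpoint zvars_bound (e : zexpr) : nat :=
  match e with
  | ZVar n => n.+1
  | ZAdd e1 e2 => maxn (zvars_bound e1) (zvars_bound e2)
  | ZOpp e1 => zvars_bound e1
  | ZZero => 0
  end.

Lemma zeval_sum (V : zmodType) (env : seq V) e n : (zvars_bound e <= n)%N ->
  zeval env e = \sum_(i < n) env`_i *~ zcoef e i.
Proof.
elim: e => [k|e1 IH1 e2 IH2|e1 IH1|] /= hn.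
- rewrite (bigD1 (Ordinal hn)) //= eqxx mulr1z big1 ?addr0 // => i /eqP ik.
  by case: eqP => [ki|_]; [case: ik; apply: val_inj | rewrite mulr0z].
- rewrite geq_max in hn; case/andP: hn => hn1 hn2.
  by rewrite IH1 // IH2 // -big_split; apply: eq_bigr => i _; rewrite mulrzDr.
- by rewrite IH1 // -sumrN; apply: eq_bigr => i _; rewrite mulrNz.
- by rewrite big1 // => i _; rewrite mulr0z.
Qed.

Lemma zeval_eq_coef (V : zmodType) (env : seq V) e1 e2 :
  all (fun i => zcoef e1 i == zcoef e2 i) (iota 0 (maxn (zvars_bound e1) (zvars_bound e2))) ->
  zeval env e1 = zeval env e2.
Proof.
move=> /allP coefE.
rewrite (@zeval_sum _ _ _ (maxn (zvars_bound e1) (zvars_bound e2))) ?leq_maxl //.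
rewrite (@zeval_sum _ _ _ (maxn (zvars_bound e1) (zvars_bound e2))) ?leq_maxr //.
apply: eq_bigr => i _; congr (_ *~ _); apply/eqP/coefE.
by rewrite mem_iota add0n ltn_ord.
Qed.

(* Atoms are identified up to conversion. *)
Ltac zindex x env :=
  lazymatch env with
  | ?y :: ?r =>
      match constr:(tt) with
      | _ => let _ := constr:(erefl x : x = y) in constr:(0%nat)
      | _ => let n := zindex x r in constr:(n.+1)
      end
  end.

Ltac zpush env t :=
  lazymatch env with
  | nil => constr:([:: t])
  | ?y :: ?r => let r' := zpush r t in constr:(y :: r')
  end.

Ltac zreify env t :=
  lazymatch t with
  | (?a + ?b)%R =>
      lazymatch zreify env a with (?env1, ?ea) =>
      lazymatch zreify env1 b with (?env2, ?eb) => constr:((env2, ZAdd ea eb)) end end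
  | (- ?a)%R => lazymatch zreify env a with (?env1, ?ea) => constr:((env1, ZOpp ea)) end
  | 0%R => constr:((env, ZZero))
  | _ =>
      match constr:(tt) with
      | _ => let n := zindex t env in constr:((env, ZVar n))
      | _ => let n := eval compute in (size env) in
             let env' := zpush env t in constr:((env', ZVar n))
      end
  end.

(* Proves an identity between Z-linear combinations of atoms in a zmodType. *)
Ltac abel :=
  lazymatch goal with |- @eq ?V ?l ?r =>
    lazymatch zreify (@nil V) l with (?env1, ?el) =>
    lazymatch zreify env1 r with (?env, ?er) =>
      change (zeval env el = zeval env er); apply: zeval_eq_coef; by vm_compute
    end end
  end.

Lemma eq_add_zero (V : zmodType) (x y z : V) : x = y + z -> z = 0 -> x = y.
Proof. by move=> -> ->; rewrite addr0. Qed.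

(* [add_eqn h] and [sub_eqn h], for [h : l = r], reduce a goal [x = y] to
   [x = y + (l - r)], resp. [x = y + (r - l)]. *)
Ltac add_eqn h := lazymatch type of h with ?l = ?r =>
  apply: (@eq_add_zero _ _ _ (l - r)); [| by rewrite h subrr] end.
Ltac sub_eqn h := lazymatch type of h with ?l = ?r =>
  apply: (@eq_add_zero _ _ _ (r - l)); [| by rewrite h subrr] end.

Section Linear.
Variable K : fieldType.
Implicit Types U V : lmodType K.

Lemma linmapD U V (f : U -> V) : linmap f -> forall x y, f (x + y) = f x + f y.
Proof. by move=> hf x y; have := hf 1 x y; rewrite !scale1r. Qed.

Lemma linmap0 U V (f : U -> V) : linmap f -> f 0 = 0.
Proof. by move=> hf; apply: (addIr (f 0)); rewrite -linmapD // addr0 add0r. Qed.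

Lemma linmapN U V (f : U -> V) : linmap f -> forall x, f (- x) = - f x.
Proof. by move=> hf x; apply/eqP; rewrite -addr_eq0 -linmapD // addNr (linmap0 hf). Qed.

Lemma linmapZ U V (f : U -> V) : linmap f -> forall c x, f (c *: x) = c *: f x.
Proof. by move=> hf c x; have := hf c x 0; rewrite (linmap0 hf) !addr0. Qed.

Lemma linmap_can U (f g : U -> U) : linmap f -> cancel f g -> cancel g f -> linmap g.
Proof. by move=> hf fK gK c x y; apply: (can_inj fK); rewrite hf !gK. Qed.

Section HomLTSTheory.
Variables (V : lmodType K) (br : V -> V -> V -> V) (al : V -> V).
Hypothesis hV : HomLTS br al.

Lemma HomLTS_linear : linmap al. Proof. by case: hV. Qed.
Lemma HomLTS_linear1 y z : linmap (fun x => br x y z).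
Proof. by case: hV => _ [[h _] _]. Qed.
Lemma HomLTS_linear2 x z : linmap (fun y => br x y z).
Proof. by case: hV => _ [[_ [h _]] _]. Qed.
Lemma HomLTS_linear3 x y : linmap (fun z => br x y z).
Proof. by case: hV => _ [[_ [_ h]] _]. Qed.
Lemma HomLTS_multiplicative x y z : al (br x y z) = br (al x) (al y) (al z).
Proof. by case: hV => _ [_ [h _]]. Qed.
Lemma HomLTS_skew x y z : br x y z + br y x z = 0.
Proof. by case: hV => _ [_ [_ [h _]]]. Qed.
Lemma HomLTS_cyclic x y z : br x y z + br z x y + br y z x = 0.
Proof. by case: hV => _ [_ [_ [_ [h _]]]]. Qed.
Lemma HomLTS_fundamental a b x y z :
  br (al a) (al b) (br x y z) =
  br (br a b x) (al y) (al z) + br (al x) (br a b y) (al z) + br (al x) (al y) (br a b z).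
Proof. by case: hV => _ [_ [_ [_ [_ h]]]]. Qed.

End HomLTSTheory.

Section ActionTheory.
Variables (G H : lmodType K) (brg : G -> G -> G -> G) (alg : G -> G)
  (brh : H -> H -> H -> H) (alh : H -> H) (theta : G -> G -> H -> H).
Hypothesis hact : action brg alg brh alh theta.

Lemma action_linear1 y u : linmap (fun x => theta x y u).
Proof. by case: hact => [[_ [_ [h _]]] _ _ _]. Qed.
Lemma action_linear2 x u : linmap (fun y => theta x y u).
Proof. by case: hact => [[_ [_ [_ [h _]]]] _ _ _]. Qed.
Lemma action_linear3 x y : linmap (theta x y).
Proof. by case: hact => [[_ [h _]] _ _ _]. Qed.
Lemma action_alpha x y u : theta (alg x) (alg y) (alh u) = alh (theta x y u).
Proof. by case: hact => [[_ [_ [_ [_ [h _]]]]] _ _ _]. Qed.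
Lemma action_Dop x y a b u :
  theta (alg a) (alg b) (Dop theta x y u) - Dop theta (alg x) (alg y) (theta a b u)
  + theta (brg x y a) (alg b) (alh u) + theta (alg a) (brg x y b) (alh u) = 0.
Proof. by case: hact => [[_ [_ [_ [_ [_ [_ h]]]]]] _ _ _]. Qed.
Lemma action_derivation x y u v w :
  theta (alg x) (alg y) (brh u v w) =
  brh (theta x y u) (alh v) (alh w) + brh (alh u) (theta x y v) (alh w)
  + brh (alh u) (alh v) (theta x y w).
Proof. by case: hact. Qed.
Lemma action_bracket0 x y u v w : theta (alg x) (alg y) (brh u v w) = 0.
Proof. by case: hact. Qed.

Lemma action_alpha_fixed x y u :
  alg x = x -> alg y = y -> theta x y (alh u) = alh (theta x y u).
Proof. by move=> hx hy; rewrite -action_alpha hx hy. Qed.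

Lemma action_bracket0_fixed x y u v w :
  alg x = x -> alg y = y -> theta x y (brh u v w) = 0.
Proof. by move=> hx hy; rewrite -hx -hy action_bracket0. Qed.

End ActionTheory.

Lemma OOp_transport (G H : lmodType K) brg alg brh alh theta kappa
    (P Q : H -> G) phih phig :
  OOp brg alg brh alh theta kappa P ->
  OOp_hom brg alg brh alh theta P Q phih phig ->
  (forall y, exists x, phih x = y) -> OOp brg alg brh alh theta kappa Q.
Proof.
case=> linP Palpha Pbr [[linh halpha hbr] [ling galpha gbr] PQ htheta] hsurj.
split.
- move=> c x y; have [[x' <-] [y' <-]] := (hsurj x, hsurj y).
  by rewrite -(linmapZ linh) -(linmapD linh) -!PQ linP (linmapD ling) (linmapZ ling).
- by move=> y; have [x <-] := hsurj y; rewrite -halpha -!PQ Palpha galpha.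
- move=> u v w; have [[[u' <-] [v' <-]] [w' <-]] := (hsurj u, hsurj v, hsurj w).
  rewrite -!PQ -gbr Pbr PQ /Dop !(linmapD linh) !(linmapN linh) (linmapZ linh).
  by rewrite hbr !htheta !PQ.
Qed.

Lemma idPlusT_surj U (f : U -> U) y : exists x, idPlusT f x = y.
Proof. by exists (y.1, y.2 - f y.1); rewrite /idPlusT subrK; case: y. Qed.

End Linear.

Section Deformations.
Variables (K : fieldType) (kappa : K) (G H : lmodType K)
  (brg : G -> G -> G -> G) (alg alg_inv : G -> G)
  (brh : H -> H -> H -> H) (alh alh_inv : H -> H)
  (theta : G -> G -> H -> H) (A : H -> G).
Hypotheses (hG : HomLTS brg alg) (algK : cancel alg alg_inv) (alg_invK : cancel alg_inv alg)
  (hH : HomLTS brh alh) (alhK : cancel alh alh_inv) (alh_invK : cancel alh_inv alh)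
  (hact : action brg alg brh alh theta) (hA : OOp brg alg brh alh theta kappa A).

Local Notation LD := (linear_deformation brg alg brh alh theta kappa A).
Local Notation Z1A := (Z1 brg alg brh alh theta kappa A).
Local Notation B1A := (B1 brg alg alh_inv theta A).
Local Notation Imap := (Imap brg alh_inv theta A).

Let alg_inv_linear : linmap alg_inv := linmap_can (HomLTS_linear hG) algK alg_invK.
Let alh_inv_linear : linmap alh_inv := linmap_can (HomLTS_linear hH) alhK alh_invK.

Lemma A_linear : linmap A. Proof. by case: hA. Qed.
Lemma A_alpha u : A (alh u) = alg (A u). Proof. by case: hA. Qed.
Lemma A_bracket u v w : brg (A u) (A v) (A w) =
  A (Dop theta (A u) (A v) w - theta (A u) (A w) v + theta (A v) (A w) u
     + kappa *: brh u v w).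
Proof. by case: hA. Qed.

Lemma A_alpha_inv u : alg_inv (A u) = A (alh_inv u).
Proof. by rewrite -{1}(alh_invK u) A_alpha algK. Qed.

Tactic Notation "lin_rw" uconstr(L) :=
  rewrite ?(linmapD L) ?(linmapN L) ?(linmap0 L) ?(linmapZ L).

Ltac expand :=
  rewrite ?/Dop ?/thetaA ?/DA ?/bracketA ?/Imap /=;
  repeat progress (
    lin_rw (HomLTS_linear hG); lin_rw (HomLTS_linear hH);
    lin_rw alg_inv_linear; lin_rw alh_inv_linear; lin_rw A_linear;
    lin_rw (HomLTS_linear1 hG _ _); lin_rw (HomLTS_linear2 hG _ _);
    lin_rw (HomLTS_linear3 hG _ _); lin_rw (HomLTS_linear1 hH _ _);
    lin_rw (HomLTS_linear2 hH _ _); lin_rw (HomLTS_linear3 hH _ _);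
    lin_rw (action_linear1 hact _ _); lin_rw (action_linear2 hact _ _);
    lin_rw (action_linear3 hact _ _);
    rewrite ?scalerDr ?scalerN ?scaler0).

Lemma linear_deformationP A1 : LD A1 <-> Z1A A1.
Proof.
(* The t-part of the O-operator identity for A + tA1 is the cocycle identity
   up to skew-symmetry and the cyclic identity of brg. *)
have skew := HomLTS_skew hG; have cyclic := HomLTS_cyclic hG.
split.
- case=> linA1 [_ defo_alpha defo_bracket]; split=> // [u | u v w].
    have := congr1 snd (defo_alpha (u, 0)).
    by rewrite /= (linmap0 (HomLTS_linear hH)) (linmap0 A_linear) !add0r => ->.
  have := congr1 snd (defo_bracket (u, 0) (v, 0) (w, 0)).
  rewrite /ext3 /defo /extTheta /Dop /= => E.
  have sk1 := skew (A1 v) (A u) (A w); have cy := cyclic (A u) (A v) (A1 w).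
  have sk2 := skew (A v) (A1 w) (A u).
  add_eqn E; sub_eqn sk1; sub_eqn cy; add_eqn sk2.
  expand; lin_rw linA1; expand; abel.
- case=> linA1 A1_alpha cocycle; split=> //; split.
  + move=> c [x1 x2] [y1 y2]; apply: injective_projections => /=.
      by rewrite (linmapD A_linear) (linmapZ A_linear).
    by expand; lin_rw linA1; expand; abel.
  + move=> [u1 u2]; apply: injective_projections; rewrite /defo /ext1 /=.
      exact: A_alpha.
    by rewrite (linmapD (HomLTS_linear hG)) A_alpha A1_alpha.
  + move=> [u1 u2] [v1 v2] [w1 w2].
    apply: injective_projections; rewrite /ext3 /defo /extTheta /=.
      have o := A_bracket u1 v1 w1; add_eqn o; expand; abel.
    have o1 := A_bracket u2 v1 w1; have o2 := A_bracket u1 v2 w1.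
    have o3 := A_bracket u1 v1 w2; have c := cocycle u1 v1 w1.
    have sk1 := skew (A1 v1) (A u1) (A w1); have cy := cyclic (A u1) (A v1) (A1 w1).
    have sk2 := skew (A v1) (A1 w1) (A u1).
    add_eqn o1; add_eqn o2; add_eqn o3; add_eqn c; add_eqn sk1; add_eqn cy; sub_eqn sk2.
    expand; lin_rw linA1; expand; abel.
Qed.

Lemma ImapZl c a b u : Imap (c *: a) b u = c *: Imap a b u.
Proof. by expand; abel. Qed.

Lemma Imap_linear a b : linmap (Imap a b).
Proof. by move=> c x y; expand; abel. Qed.

Section InnerDerivation.
Variables a b : G.
Hypotheses (ha : alg a = a) (hb : alg b = b).

Local Notation Dab := (fun u => alh_inv (Dop theta a b u)).
Local Notation Lab := (fun x => alg_inv (brg a b x)).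

Lemma Dab_alpha u : Dab (alh u) = Dop theta a b u.
Proof.
rewrite /Dop !(action_alpha_fixed hact) //.
by rewrite -(linmapN (HomLTS_linear hH)) -(linmapD (HomLTS_linear hH)) alhK.
Qed.

Lemma Lab_alpha x : Lab (alg x) = brg a b x.
Proof. by rewrite -{1}ha -{1}hb -(HomLTS_multiplicative hG) algK. Qed.

Lemma Dab_alpha_inv u : Dab u = Dop theta a b (alh_inv u).
Proof. by rewrite -{1}(alh_invK u) Dab_alpha. Qed.

Lemma Lab_alpha_inv x : Lab x = brg a b (alg_inv x).
Proof. by rewrite -{1}(alg_invK x) Lab_alpha. Qed.

Lemma Dab_derivation x y z :
  Dab (brh x y z) = brh (Dab x) y z + brh x (Dab y) z + brh x y (Dab z).
Proof.
(* Both sides vanish: by the action axioms, theta a b and theta b a annihilate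
   brackets while acting on them as derivations. *)
rewrite -(alh_invK x) -(alh_invK y) -(alh_invK z) !Dab_alpha.
set x' := alh_inv x; set y' := alh_inv y; set z' := alh_inv z.
rewrite /Dop !(action_bracket0_fixed hact) // subrr (linmap0 alh_inv_linear).
have e1 := action_derivation hact a b x' y' z'.
rewrite ha hb (action_bracket0_fixed hact) // in e1.
have e2 := action_derivation hact b a x' y' z'.
rewrite ha hb (action_bracket0_fixed hact) // in e2.
add_eqn e2; sub_eqn e1; expand; abel.
Qed.

Lemma Lab_derivation x y z :
  Lab (brg x y z) = brg (Lab x) y z + brg x (Lab y) z + brg x y (Lab z).
Proof.
apply: (can_inj algK); rewrite alg_invK !(linmapD (HomLTS_linear hG)).
rewrite !(HomLTS_multiplicative hG) !alg_invK.
by rewrite -(HomLTS_fundamental hG) ha hb.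
Qed.

Lemma Dab_theta x y u :
  Dab (theta x y u) = theta (Lab x) y u + theta x (Lab y) u + theta x y (Dab u).
Proof.
rewrite -(alg_invK x) -(alg_invK y) -(alh_invK u) (action_alpha hact).
rewrite !Dab_alpha !Lab_alpha.
have e := action_Dop hact a b (alg_inv x) (alg_inv y) (alh_inv u).
rewrite ha hb in e; sub_eqn e; expand; abel.
Qed.

Lemma idPlusT_Dab_hom :
  HomLTS_hom (ext3 brh) (ext1 alh) (ext3 brh) (ext1 alh) (idPlusT Dab).
Proof.
split.
- by move=> c [x1 x2] [y1 y2]; apply: injective_projections => //=; expand; abel.
- move=> [x1 x2]; apply: injective_projections => //=.
  by rewrite Dab_alpha (linmapD (HomLTS_linear hH)) alh_invK.
- move=> [x1 x2] [y1 y2] [z1 z2]; apply: injective_projections => //=.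
  have d := Dab_derivation x1 y1 z1; add_eqn d; expand; abel.
Qed.

Lemma idPlusT_Lab_hom :
  HomLTS_hom (ext3 brg) (ext1 alg) (ext3 brg) (ext1 alg) (idPlusT Lab).
Proof.
split.
- by move=> c [x1 x2] [y1 y2]; apply: injective_projections => //=; expand; abel.
- move=> [x1 x2]; apply: injective_projections => //=.
  by rewrite Lab_alpha (linmapD (HomLTS_linear hG)) alg_invK.
- move=> [x1 x2] [y1 y2] [z1 z2]; apply: injective_projections => //=.
  have d := Lab_derivation x1 y1 z1; add_eqn d; expand; abel.
Qed.

Lemma idPlusT_theta x y u :
  idPlusT Dab (extTheta theta x y u) =
  extTheta theta (idPlusT Lab x) (idPlusT Lab y) (idPlusT Dab u).
Proof.
apply: injective_projections => //=.
have d := Dab_theta x.1 y.1 u.1; add_eqn d; expand; abel.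
Qed.

Lemma idPlusT_defoP A1 A1' :
  (forall u, idPlusT Lab (defo A A1 u) = defo A A1' (idPlusT Dab u)) <->
  (forall u, A1 u - A1' u = Imap a b u).
Proof.
split=> [defoE u | ImapE [u1 u2]].
  have := congr1 snd (defoE (u, 0)).
  rewrite /= Dab_alpha_inv Lab_alpha_inv A_alpha_inv => E.
  add_eqn E; expand; abel.
apply: injective_projections => //=.
have E := ImapE u1; rewrite Dab_alpha_inv Lab_alpha_inv A_alpha_inv.
add_eqn E; expand; abel.
Qed.

Lemma idPlusT_OOp_homP A1 A1' :
  OOp_hom (ext3 brg) (ext1 alg) (ext3 brh) (ext1 alh) (extTheta theta)
    (defo A A1) (defo A A1') (idPlusT Dab) (idPlusT Lab) <->
  (forall u, A1 u - A1' u = Imap a b u).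
Proof.
split=> [[_ _ defoE _] | ImapE]; first exact/idPlusT_defoP.
split; [exact: idPlusT_Dab_hom | exact: idPlusT_Lab_hom | | exact: idPlusT_theta].
exact/idPlusT_defoP.
Qed.

Lemma linear_deformation_subImap A1 : LD A1 ->
  let A1' := fun u => A1 u - Imap a b u in
  LD A1' /\ equiv_deformations brg alg alg_inv brh alh alh_inv theta A A1 A1'.
Proof.
move=> [linA1 defoA1] A1'.
have hom : OOp_hom (ext3 brg) (ext1 alg) (ext3 brh) (ext1 alh) (extTheta theta)
    (defo A A1) (defo A A1') (idPlusT Dab) (idPlusT Lab).
  by apply/idPlusT_OOp_homP => u; rewrite /A1' opprB addrC subrK.
split; last by exists a, b.
split; last exact: OOp_transport defoA1 hom (idPlusT_surj _).
by move=> c x y; rewrite /A1' linA1 Imap_linear; expand; abel.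
Qed.

End InnerDerivation.

Local Notation DE := (deformation_equiv brg alg alg_inv brh alh alh_inv theta kappa A).

Definition Imap_span (s : seq (K * G * G)) (v : H) : G :=
  \sum_(p <- s) p.1.1 *: Imap p.1.2 p.2 v.

Lemma linear_deformation_sub_span s A1 :
  all (fun p => (alg p.1.2 == p.1.2) && (alg p.2 == p.2)) s -> LD A1 ->
  LD (fun v => A1 v - Imap_span s v) /\ DE A1 (fun v => A1 v - Imap_span s v).
Proof.
elim: s A1 => [|[[c a] b] s IH] A1 hs hA1.
  have -> : (fun v => A1 v - Imap_span [::] v) = A1.
    by apply: functional_extensionality => v; rewrite /Imap_span big_nil subr0.
  by split=> //; apply: rst_refl.
move: hs => /= /andP[/andP[/eqP ha /eqP hb] hs].
have hca : alg (c *: a) = c *: a by rewrite (linmapZ (HomLTS_linear hG)) ha.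
have [hB hAB] := linear_deformation_subImap hca hb hA1.
have [hC hBC] := IH _ hs hB.
have -> : (fun v => A1 v - Imap_span ((c, a, b) :: s) v) =
          (fun v => A1 v - Imap (c *: a) b v - Imap_span s v).
  by apply: functional_extensionality => v; rewrite /Imap_span big_cons ImapZl /=; abel.
by split=> //; apply: rst_trans hBC; apply: rst_step.
Qed.

Lemma deformation_equiv_B1 A1 A1' : DE A1 A1' -> B1A (fun v => A1 v - A1' v).
Proof.
elim=> {A1 A1'} [A1 A1' [_ _ [a [b [ha hb hom]]]] | A1 | A1 A1' _ [s [hs E]]
               | A1 A1' A1'' _ [s1 [hs1 E1]] _ [s2 [hs2 E2]]].
- exists [:: (1, a, b)]; split; first by rewrite /= ha hb !eqxx.
  move=> v; rewrite big_seq1 scale1r.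
  exact: (proj1 (idPlusT_OOp_homP ha hb A1 A1') hom).
- by exists [::]; split=> // v; rewrite big_nil subrr.
- exists [seq (- p.1.1, p.1.2, p.2) | p <- s]; split.
    by rewrite all_map; apply: sub_all hs => p.
  move=> v; rewrite big_map -[A1' v - A1 v]opprB E -sumrN.
  by apply: eq_bigr => p _; rewrite scaleNr.
- exists (s1 ++ s2); split; first by rewrite all_cat hs1 hs2.
  by move=> v; rewrite big_cat -E1 -E2 /=; abel.
Qed.

Lemma B1_deformation_equiv A1 A1' : LD A1 -> B1A (fun v => A1 v - A1' v) -> DE A1 A1'.
Proof.
move=> hA1 [s [hs E]].
have -> : A1' = (fun v => A1 v - Imap_span s v).
  by apply: functional_extensionality => v; rewrite /Imap_span -E opprB addrC subrK.
exact: (linear_deformation_sub_span hs hA1).2.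
Qed.

End Deformations.

Theorem mainTheorem6 (K : fieldType) (Kchar0 : [pchar K] =i pred0) (kappa : K)
  (g h : lmodType K)
  (brg : g -> g -> g -> g) (alg alg_inv : g -> g)
  (brh : h -> h -> h -> h) (alh alh_inv : h -> h)
  (theta : g -> g -> h -> h) (A : h -> g) :
  HomLTS brg alg -> cancel alg alg_inv -> cancel alg_inv alg ->
  HomLTS brh alh -> cancel alh alh_inv -> cancel alh_inv alh ->
  action brg alg brh alh theta ->
  OOp brg alg brh alh theta kappa A ->
  exists F : (h -> g) -> (h -> g),
    [/\ (forall A1, linear_deformation brg alg brh alh theta kappa A A1 ->
                    Z1 brg alg brh alh theta kappa A (F A1)),
        (forall A1 A1',
           linear_deformation brg alg brh alh theta kappa A A1 ->
           linear_deformation brg alg brh alh theta kappa A A1' ->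
           (deformation_equiv brg alg alg_inv brh alh alh_inv theta kappa A A1 A1'
            <-> B1 brg alg alh_inv theta A (fun v => F A1 v - F A1' v))) &
        (forall f, Z1 brg alg brh alh theta kappa A f ->
           exists A1, linear_deformation brg alg brh alh theta kappa A A1 /\
                      B1 brg alg alh_inv theta A (fun v => F A1 v - f v))].
Proof.
move=> hG algK alg_invK hH alhK alh_invK hact hA.
have deformationP := linear_deformationP hG hH hact hA.
have equiv_B1 := deformation_equiv_B1 hG algK alg_invK hH alhK alh_invK hact hA.
have B1_equiv := B1_deformation_equiv hG algK alg_invK hH alhK alh_invK hact hA.
exists id; split=> [A1 /deformationP // | A1 A1' hA1 _ | f /deformationP hf].
  by split; [exact: equiv_B1 | exact: B1_equiv].
by exists f; split=> //; exists [::]; split=> // v; rewrite big_nil subrr.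
Qed.
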